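(* Let $X$ and $Y$ be nontrivial real Banach spaces. (a) If $X^*$ has the weak$^*$ local diameter $2$ property, then $(X\oplus_1 Y)^*$ has the weak$^*$ local diameter $2$ property. (b) If $X^*$ and $Y^*$ have the weak$^*$ local diameter $2$ property and $1<p\leq\infty$, then $(X\oplus_p Y)^*$ has the weak$^*$ local diameter $2$ property. (c) If $(X\oplus_p Y)^*$ has the weak$^*$ local diameter $2$ property, where $1<p\leq\infty$, then $X^*$ has the weak$^*$ local diameter $2$ property.
   Context: For $1\le p<\infty$, $X\oplus_p Y$ is $X\times Y$ with norm $(\|x\|^p+\|y\|^p)^{1/p}$; $X\oplus_\infty Y$ has norm $\max\{\|x\|,\|y\|\}$. For a Banach space $Z$, a weak$^*$ slice of $B_{Z^*}$ is a set $\{z^*\in B_{Z^*}: z^*(z)>1-\alpha\}$ with $z\in S_Z$, $\alpha>0$; $Z^*$ has the weak$^*$ local diameter $2$ property if every weak$^*$ slice of $B_{Z^*}$ has diameter $2$. *)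

From HB Require Import structures.
From mathcomp Require Import all_boot all_order all_algebra.
From mathcomp Require Import all_classical all_reals all_analysis.
Set Implicit Arguments. Unset Strict Implicit. Unset Printing Implicit Defensive.
Import Order.TTheory GRing.Theory Num.Theory.
Import numFieldNormedType.Exports.
Local Open Scope classical_set_scope.
Local Open Scope ring_scope.

(* A real normed space is presented as a real vector space V together with
   its norm N : V -> R. The dual V^* consists of the bounded (= continuous)
   linear functionals f : V -> R, with the operator norm. *)
Section Dual.
Variables (R : realType) (V : lmodType R) (N : V -> R).

Definition is_dual_elem (f : V -> R) : Prop :=
  (forall (a : R) (x y : V), f (a *: x + y) = a * f x + f y) /\
  (exists C : R, forall x, `|f x| <= C * N x).

Definition opnorm (f : V -> R) : R :=
  sup [set `|f x| | x in [set x : V | N x <= 1]].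

Definition dual_ball : set (V -> R) :=
  [set f | is_dual_elem f /\ opnorm f <= 1].

Definition wstar_slice (z : V) (alpha : R) : set (V -> R) :=
  [set f | dual_ball f /\ 1 - alpha < f z].

Definition dual_diam (S : set (V -> R)) : R :=
  sup [set r | exists f g, S f /\ S g /\ r = opnorm (fun v => f v - g v)].

Definition wstar_LD2P : Prop :=
  forall z : V, N z = 1 -> forall alpha : R, 0 < alpha ->
    dual_diam (wstar_slice z alpha) = 2.
End Dual.

Definition psum_norm (R : realType) (X Y : normedModType R) (p : \bar R)
  (v : X * Y) : R :=
  match p with
  | +oo%E => Num.max `|v.1| `|v.2|
  | EFin r => (`|v.1| `^ r + `|v.2| `^ r) `^ r^-1
  | -oo%E => 0
  end.

From HB Require Import structures.
From mathcomp Require Import all_boot all_order all_algebra.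
From mathcomp Require Import all_classical all_reals all_analysis.
From mathcomp Require Import ring lra.
Import Order.TTheory GRing.Theory Num.Theory.
Import numFieldNormedType.Exports.
Set Implicit Arguments. Unset Strict Implicit.
Local Open Scope ring_scope.
Local Open Scope classical_set_scope.

(* (a), (b): take in each factor two functionals of a weak* slice that are almost 2 apart
   at some point of the unit ball, and glue them with weights that norm the given point
   (x, y) of the sum. For p = 1 the second factor is filled by a Hahn-Banach functional
   norming y; for 1 < p < oo the weights are |x|^(p-1) and |y|^(p-1), which have l_q-norm 1
   (Hoelder); for p = oo one coordinate of (x, y) already has norm 1 and the projection onto
   it is a norm-one retraction.
   (c): for p > 1 the norm of X (+)_p Y is flat at (x, 0) in the Y-directions, so a
   functional almost norming (x, 0) almost vanishes on 0 (+) B_Y; restricting two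
   far-apart such functionals to X gives far-apart elements of a slice of B_{X^*}. *)

Section LinearFunctional.
Variables (R : realType) (V : lmodType R) (f : V -> R).
Hypothesis f_lin : forall (a : R) (x y : V), f (a *: x + y) = a * f x + f y.

Lemma linfun0 : f 0 = 0.
Proof. have := f_lin 1 0 0; rewrite scaler0 addr0 mul1r; lra. Qed.

Lemma linfunZ a x : f (a *: x) = a * f x.
Proof. by rewrite -[a *: x]addr0 f_lin linfun0 addr0. Qed.

Lemma linfunD x y : f (x + y) = f x + f y.
Proof. by have := f_lin 1 x y; rewrite scale1r mul1r. Qed.

Lemma linfunN x : f (- x) = - f x.
Proof. by rewrite -scaleN1r linfunZ mulN1r. Qed.
End LinearFunctional.

Section DualBall.
Variables (R : realType) (V : lmodType R) (N : V -> R).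
Hypothesis N_ge0 : forall v, 0 <= N v.
Hypothesis NZ : forall (a : R) v, N (a *: v) = `|a| * N v.

Lemma seminorm0 : N 0 = 0.
Proof. by rewrite -(scale0r (0 : V)) NZ normr0 mul0r. Qed.

Lemma le_opnorm f C x : (forall v, `|f v| <= C * N v) -> N x <= 1 ->
  `|f x| <= opnorm N f.
Proof.
move=> fC Nx; apply: ub_le_sup; last by exists x.
exists `|C| => _ [v Nv <-].
apply: le_trans (fC v) (le_trans (ler_wpM2r (N_ge0 v) (ler_norm C)) _).
by rewrite -[leRHS]mulr1 ler_wpM2l.
Qed.

Lemma opnorm_le f c : (forall x, N x <= 1 -> `|f x| <= c) -> opnorm N f <= c.
Proof.
move=> fc; apply: ge_sup; first by exists `|f 0|, 0; rewrite //= seminorm0.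
by move=> _ [x Nx <-]; exact: fc.
Qed.

Lemma opnorm_lt_witness f c : c < opnorm N f -> exists2 x, N x <= 1 & c < `|f x|.
Proof.
move=> cf; apply: contrapT => nx; move: cf; rewrite ltNge => /negP; apply.
apply: opnorm_le => x Nx; rewrite leNgt; apply/negP => fx; apply: nx.
by exists x.
Qed.

Lemma dual_ball_lin f : dual_ball N f ->
  forall (a : R) x y, f (a *: x + y) = a * f x + f y.
Proof. by case=> [[]]. Qed.

Lemma dual_ball_le f : dual_ball N f -> forall v, `|f v| <= N v.
Proof.
move=> [[f_lin [C fC]] f1] v; apply/ler_addgt0Pr => e e0.
set t := N v + e; have t0 : 0 < t by rewrite /t ltr_wpDl.
have : `|f (t^-1 *: v)| <= 1.
  apply: le_trans f1; apply: (le_opnorm fC).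
  by rewrite NZ gtr0_norm ?invr_gt0 // ler_pdivrMl // mulr1 lerDl ltW.
by rewrite (linfunZ f_lin) normrM gtr0_norm ?invr_gt0 // ler_pdivrMl // mulr1.
Qed.

Lemma dual_ball_intro f :
  (forall (a : R) x y, f (a *: x + y) = a * f x + f y) ->
  (forall v, `|f v| <= N v) -> dual_ball N f.
Proof.
move=> f_lin fN; split; first by split=> //; exists 1 => v; rewrite mul1r.
by apply: opnorm_le => x Nx; exact: le_trans (fN x) Nx.
Qed.

Lemma wstar_slice_sub z a : wstar_slice N z a `<=` dual_ball N.
Proof. by move=> f []. Qed.

Lemma dual_diam2P (S : set (V -> R)) : S `<=` dual_ball N ->
  dual_diam N S = 2 <-> forall e, 0 < e ->
    exists f g x, [/\ S f, S g, N x <= 1 & 2 - e < f x - g x].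
Proof.
move=> SB; rewrite /dual_diam; set E := (X in sup X).
have fg2 f g : S f -> S g -> forall v, `|f v - g v| <= 2 * N v.
  move=> Sf Sg v; have := dual_ball_le (SB _ Sf) v.
  have := dual_ball_le (SB _ Sg) v; have := ler_normB (f v) (g v); lra.
have E2 : ubound E 2.
  move=> _ [f [g [Sf [Sg ->]]]]; apply: opnorm_le => x Nx.
  have := fg2 _ _ Sf Sg x; lra.
split=> [supE e e0|wide].
  have E0 : E !=set0.
    apply/set0P/eqP => E0; move: supE.
    by rewrite E0 sup0 => /esym/eqP; rewrite pnatr_eq0.
  have [_ [f [g [Sf [Sg ->]]]]] := sup_adherent e0 (conj E0 (ex_intro _ 2 E2)).
  rewrite supE => /opnorm_lt_witness [x Nx fgx].
  have [fgx0|fgx0] := leP 0 (f x - g x).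
    by exists f, g, x; split; rewrite // -(ger0_norm fgx0).
  by exists g, f, x; split => //; move: fgx; rewrite ltr0_norm //; lra.
apply/le_anti/andP; split.
  apply: ge_sup E2; have [f [g [x [Sf Sg _ _]]]] := wide 1 ltr01.
  by exists (opnorm N (fun v => f v - g v)), f, g.
apply/ler_addgt0Pr => e e0; have [f [g [x [Sf Sg Nx fgx]]]] := wide e e0.
have := le_opnorm (fg2 _ _ Sf Sg) Nx.
have : opnorm N (fun v => f v - g v) <= sup E.
  by apply: ub_le_sup; [exists 2 | exists f, g].
have := ler_norm (f x - g x); lra.
Qed.

Lemma wstar_LD2PP : wstar_LD2P N <->
  forall z, N z = 1 -> forall a e, 0 < a -> 0 < e -> exists f g x,
    [/\ wstar_slice N z a f, wstar_slice N z a g, N x <= 1 & 2 - e < f x - g x].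
Proof.
split=> [LD z Nz a e a0 e0 | wide z Nz a a0].
  exact: (dual_diam2P (@wstar_slice_sub z a)).1 (LD z Nz a a0) e e0.
by apply/(dual_diam2P (@wstar_slice_sub z a)) => e; exact: wide.
Qed.

End DualBall.

Section HahnBanach.
Variables (R : realType) (V : lmodType R) (p : V -> R).
Hypothesis p_add : forall x y, p (x + y) <= p x + p y.
Hypothesis p_homog : forall (c : R) x, 0 <= c -> p (c *: x) = c * p x.

(* A linear functional on a subspace, dominated by p, is handled through its graph, so
   that partial extensions are ordered by inclusion as required by Zorn's lemma. *)
Definition dominated_graph (A : set (V * R)) : Prop :=
  [/\ A (0, 0),
      forall x t s, A (x, t) -> A (x, s) -> t = s,
      forall (a : R) x t y s, A (x, t) -> A (y, s) -> A (a *: x + y, a * t + s) &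
      forall x t, A (x, t) -> t <= p x].

Lemma dominated_graphZ A (a : R) x t : dominated_graph A -> A (x, t) ->
  A (a *: x, a * t).
Proof. by case=> A00 _ Alin _ Axt; have := Alin a _ _ _ _ Axt A00; rewrite !addr0. Qed.

Lemma dominated_graph_chain A0 (F : set (set (V * R))) :
  F `<=` (fun A => A = set0 \/ A0 `<=` A /\ dominated_graph A) ->
  total_on F subset ->
  let U := \bigcup_(A in F) A in U = set0 \/ A0 `<=` U /\ dominated_graph U.
Proof.
move=> FP Ftot U.
have [[A FA [q Aq]]|] := pselect (exists2 A, F A & exists q, A q); last first.
  move=> Fempty; left; apply/seteqP; split=> q' // [A FA Aq'].
  by apply: Fempty; exists A => //; exists q'.
have good B b : F B -> B b -> A0 `<=` B /\ dominated_graph B.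
  by move=> FB Bq; case: (FP _ FB) => // B0; rewrite B0 in Bq.
have common B1 B2 q1 q2 : F B1 -> F B2 -> B1 q1 -> B2 q2 ->
    exists2 B, F B & [/\ dominated_graph B, B q1 & B q2].
  move=> FB1 FB2 Bq1 Bq2; have [B12|B21] := Ftot _ _ FB1 FB2.
  - by exists B2 => //; split; [exact: (good _ _ FB2 Bq2).2 | exact: B12 |].
  - by exists B1 => //; split; [exact: (good _ _ FB1 Bq1).2 | | exact: B21].
have [A0A [A00 _ _ _]] := good _ _ FA Aq.
right; split; first by move=> q' /A0A; exists A.
split.
- by exists A.
- move=> x t s [B1 FB1 B1t] [B2 FB2 B2s].
  by have [B _ [[_ Bfun _ _] Bt Bs]] := common _ _ _ _ FB1 FB2 B1t B2s; exact: Bfun Bt Bs.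
- move=> a x t y s [B1 FB1 B1t] [B2 FB2 B2s].
  have [B FB [[_ _ Blin _] Bt Bs]] := common _ _ _ _ FB1 FB2 B1t B2s.
  by exists B => //; exact: Blin.
- by move=> x t [B FB Bt]; have [_ [_ _ _ Bdom]] := good _ _ FB Bt; exact: Bdom.
Qed.

Section OneStepExtension.
Variables (A : set (V * R)) (v : V).
Hypothesis gA : dominated_graph A.
Hypothesis v_undef : forall t, ~ A (v, t).

Let E := [set r | exists u t, A (u, t) /\ r = t - p (u - v)].

Let E_ub w t' : A (w, t') -> ubound E (p (w + v) - t').
Proof.
move=> Awt' _ [u [t [Aut ->]]]; have [_ _ Alin Adom] := gA.
have := Adom _ _ (Alin 1 _ _ _ _ Aut Awt'); rewrite scale1r mul1r.
have := p_add (u - v) (w + v); rewrite addrACA addNr addr0; lra.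
Qed.

Let s := sup E.

Let E0 : E !=set0.
Proof. by case: gA => A00 _ _ _; exists (0 - p (0 - v)), 0, 0. Qed.

Let s_ge u t : A (u, t) -> t - p (u - v) <= s.
Proof.
move=> Aut; apply: ub_le_sup; last by exists u, t.
by case: gA => A00 _ _ _; exists (p (0 + v) - 0); exact: E_ub.
Qed.

Let s_le w t' : A (w, t') -> s <= p (w + v) - t'.
Proof. by move=> Awt'; apply: ge_sup E0 _; exact: E_ub. Qed.

(* Any value s of the extension at v with sup_u (t - p (u - v)) <= s <= inf_w (p (w + v) - t)
   keeps it dominated by p. *)
Definition graph_extension : set (V * R) :=
  [set q | exists u t (c : R), A (u, t) /\ q = (u + c *: v, t + c * s)].

Let extension_dominated u t (c : R) : A (u, t) -> t + c * s <= p (u + c *: v).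
Proof.
move=> Aut; have [c0|c0|->] := ltgtP c 0; last first.
- by rewrite scale0r mul0r !addr0; case: gA => _ _ _; apply.
- have := s_le (dominated_graphZ c^-1 gA Aut).
  have -> : c^-1 *: u + v = c^-1 *: (u + c *: v).
    by rewrite scalerDr scalerA mulVf ?gt_eqF // scale1r.
  have ci0 : 0 <= c^-1 by rewrite invr_ge0 ltW.
  rewrite (p_homog _ ci0) -mulrBr ler_pdivlMl //; lra.
- have := s_ge (dominated_graphZ (- c)^-1 gA Aut).
  have -> : (- c)^-1 *: u - v = (- c)^-1 *: (u + c *: v).
    by rewrite scalerDr scalerA invrN mulNr mulVf ?lt_eqF // scaleN1r.
  have ci0 : 0 <= (- c)^-1 by rewrite invr_ge0 oppr_ge0 ltW.
  rewrite (p_homog _ ci0) -mulrBr ler_pdivrMl ?oppr_gt0 //; lra.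
Qed.

Lemma graph_extension_dominated : dominated_graph graph_extension.
Proof.
have [A00 Afun Alin Adom] := gA.
split.
- by exists 0, 0, 0; rewrite scale0r mul0r !addr0.
- move=> x t1 t2 [u1 [s1 [c1 [Au1 [e1 ->]]]]] [u2 [s2 [c2 [Au2 [e2 ->]]]]].
  have [c12|c12] := eqVneq c1 c2.
    have u12 : u1 = u2 by apply: (addIr (c1 *: v)); rewrite -e1 e2 c12.
    by rewrite u12 in Au1; rewrite (Afun _ _ _ Au1 Au2) c12.
  have e : u1 + c1 *: v = u2 + c2 *: v by rewrite -e1 -e2.
  have v_eq : (c1 - c2)^-1 *: (- u1 + u2) = v.
    have -> : - u1 + u2 = (c1 - c2) *: v.
      by apply/eqP; rewrite scalerBl eq_sym subr_eq -addrA -e addKr.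
    by rewrite scalerA mulVf ?subr_eq0 // scale1r.
  have := dominated_graphZ ((c1 - c2)^-1) gA (Alin (-1) _ _ _ _ Au1 Au2).
  by rewrite scaleN1r mulN1r v_eq => /v_undef.
- move=> a x t y t' [u1 [s1 [c1 [Au1 [-> ->]]]]] [u2 [s2 [c2 [Au2 [-> ->]]]]].
  exists (a *: u1 + u2), (a * s1 + s2), (a * c1 + c2); split; first exact: Alin.
  congr pair; first by rewrite scalerDr scalerDl scalerA addrACA.
  by rewrite mulrDr mulrDl mulrA; ring.
- by move=> x t [u [t1 [c [Aut [-> ->]]]]]; exact: extension_dominated.
Qed.

Lemma graph_extension_proper : A `<` graph_extension.
Proof.
have [A00 _ _ _] := gA.
split; first by move=> [u t] Aut; exists u, t, 0; rewrite scale0r mul0r !addr0.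
move=> extA; apply: (@v_undef s); apply: extA.
by exists 0, 0, 1; rewrite scale1r mul1r !add0r.
Qed.

End OneStepExtension.

Theorem hahn_banach (A0 : set (V * R)) : dominated_graph A0 ->
  exists g : V -> R, [/\ forall (a : R) x y, g (a *: x + y) = a * g x + g y,
    forall x, g x <= p x & forall x t, A0 (x, t) -> g x = t].
Proof.
move=> gA0.
have [A [PA Amax]] := Zorn_bigcup (@dominated_graph_chain A0).
have [A0A gA] : A0 `<=` A /\ dominated_graph A.
  case: PA => // A_0; exfalso; apply: (Amax A0); last by right; split.
  have [A00 _ _ _] := gA0.
  by rewrite A_0; split=> [q []|/(_ (0, 0) A00)].
have total x : exists t, A (x, t).
  apply: contrapT => nx; have undef t : ~ A (x, t) by move=> Axt; apply: nx; exists t.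
  have [AB _] := graph_extension_proper gA undef.
  apply: (Amax (graph_extension A x)); first exact: graph_extension_proper.
  by right; split; [exact: subset_trans AB | exact: graph_extension_dominated].
have [g Ag] := choice total.
have [_ Afun Alin Adom] := gA.
exists g; split.
- by move=> a x y; apply: Afun (Ag _) _; apply: Alin.
- by move=> x; exact: Adom (Ag x).
- by move=> x t /A0A; exact: Afun (Ag x).
Qed.

Lemma sublinear0 : p 0 = 0.
Proof. by rewrite -(scale0r 0) p_homog // mul0r. Qed.

Corollary hahn_banach_point y : exists g : V -> R,
  [/\ forall (a : R) x z, g (a *: x + z) = a * g x + g z,
    forall x, g x <= p x & g y = p y].
Proof.
pose L := [set q : V * R | exists c : R, q = (c *: y, c * p y)].
have gL : dominated_graph L.
  split.
  - by exists 0; rewrite scale0r mul0r.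
  - move=> x t s [c [-> ->]] [d [cd ->]].
    have [->|y0] := eqVneq y 0; first by rewrite sublinear0 !mulr0.
    move/eqP: cd; rewrite -subr_eq0 -scalerBl scaler_eq0 (negbTE y0) orbF subr_eq0.
    by move=> /eqP ->.
  - move=> a x t z s [c [-> ->]] [d [-> ->]].
    by exists (a * c + d); rewrite scalerDl scalerA mulrDl mulrA.
  - move=> x t [c [-> ->]]; have [c0|c0] := leP 0 c; first by rewrite p_homog.
    have := p_add y (- y); rewrite subrr sublinear0.
    have Nc0 : 0 <= - c by rewrite oppr_ge0 ltW.
    have -> : c *: y = (- c) *: (- y) by rewrite scaleNr scalerN opprK.
    rewrite (p_homog _ Nc0); nra.
have [g [g_lin g_dom gL_eq]] := hahn_banach gL.
by exists g; split=> //; apply: gL_eq; exists 1; rewrite scale1r mul1r.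
Qed.

End HahnBanach.

Lemma norming_functional (R : realType) (Y : normedModType R) (y : Y) :
  exists g : Y -> R, [/\ forall (a : R) x z, g (a *: x + z) = a * g x + g z,
    forall x, `|g x| <= `|x| & g y = `|y|].
Proof.
have homog (c : R) (x : Y) : 0 <= c -> `|c *: x| = c * `|x|.
  by move=> c0; rewrite normrZ ger0_norm.
have [g [g_lin g_le gy]] := hahn_banach_point (@ler_normD _ Y) homog y.
exists g; split=> // x; rewrite ler_norml g_le andbT.
by have := g_le (- x); rewrite normrN (linfunN g_lin); lra.
Qed.

Lemma powRK (R : realType) (a r : R) : 0 <= a -> 0 < r -> (a `^ r) `^ r^-1 = a.
Proof. by move=> a0 r0; rewrite -powRrM mulfV ?gt_eqF // powRr1. Qed.

Section PsumNorm.
Variables (R : realType) (X Y : normedModType R) (p : \bar R).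
Hypothesis p_gt0 : (0 < p)%E.
Local Notation N := (@psum_norm R X Y p).

Lemma psum_norm_ge0 v : 0 <= N v.
Proof.
by case: p p_gt0 => [r _| _ |//]; rewrite /psum_norm ?powR_ge0 // le_max normr_ge0.
Qed.

Lemma psum_normZ (a : R) v : N (a *: v) = `|a| * N v.
Proof.
case: p p_gt0 => [r|_|//]; rewrite /psum_norm /= !normrZ; last by rewrite maxr_pMr.
rewrite lte_fin => r0; rewrite !powRM // -mulrDr powRM ?powR_ge0 ?addr_ge0 //.
by rewrite powRK.
Qed.

Lemma psum_norm_le v w : `|v.1| <= `|w.1| -> `|v.2| <= `|w.2| -> N v <= N w.
Proof.
case: p p_gt0 => [r|_|//]; last exact: le_max2.
rewrite lte_fin /psum_norm /= => r0 v1 v2.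
have powR_homo (s a b : R) : 0 <= s -> 0 <= a -> a <= b -> a `^ s <= b `^ s.
  move=> s0 a0 ab; apply: ge0_ler_powR => //; rewrite nnegrE //.
  exact: le_trans ab.
have r0' : 0 <= r by exact: ltW.
apply: (powR_homo r^-1); rewrite ?invr_ge0 ?addr_ge0 ?powR_ge0 //.
by apply: lerD; apply: (powR_homo r).
Qed.

Lemma psum_norm_inl x : N (x, 0) = `|x|.
Proof.
case: p p_gt0 => [r|_|//]; rewrite /psum_norm /= normr0; last by rewrite max_l.
by rewrite lte_fin => r0; rewrite powR0 ?gt_eqF // addr0 powRK.
Qed.

Lemma psum_norm_inr y : N (0, y) = `|y|.
Proof.
case: p p_gt0 => [r|_|//]; rewrite /psum_norm /= normr0; last by rewrite max_r.
by rewrite lte_fin => r0; rewrite powR0 ?gt_eqF // add0r powRK.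
Qed.

Lemma psum_norm_fst v : `|v.1| <= N v.
Proof. by rewrite -[leLHS]psum_norm_inl; apply: psum_norm_le; rewrite /= ?normr0. Qed.

Lemma psum_norm_snd v : `|v.2| <= N v.
Proof. by rewrite -[leLHS]psum_norm_inr; apply: psum_norm_le; rewrite /= ?normr0. Qed.

End PsumNorm.

Lemma psum_norm1 (R : realType) (X Y : normedModType R) (v : X * Y) :
  psum_norm 1 v = `|v.1| + `|v.2|.
Proof. by rewrite /psum_norm invr1 !powRr1 // addr_ge0. Qed.

Lemma unit_direction (R : realType) (X : normedModType R) (x : X) :
  (exists x : X, x != 0) -> exists2 x0, `|x0| = 1 & x = `|x| *: x0.
Proof.
have unit (w : X) : w != 0 -> `| `|w|^-1 *: w| = 1.
  by move=> w0; rewrite normrZ normrV ?unitfE ?normr_eq0 // normr_id mulVf ?normr_eq0.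
move=> [e e0]; have [->|x0] := eqVneq x 0.
  by exists (`|e|^-1 *: e); [exact: unit | rewrite normr0 scale0r].
exists (`|x|^-1 *: x); first exact: unit.
by rewrite scalerA mulfV ?normr_eq0 // scale1r.
Qed.

Lemma lt_convex_comb (R : realFieldType) (a b c F G : R) :
  0 <= a -> 0 <= b -> a + b = 1 -> c < F -> c < G -> c < a * F + b * G.
Proof.
move=> a0 b0 ab cF cG; set m := Num.min F G.
have aF : a * m <= a * F by rewrite ler_wpM2l // ge_min lexx.
have bG : b * m <= b * G by rewrite ler_wpM2l // ge_min lexx orbT.
have : c < m by rewrite lt_min cF cG.
have : a * m + b * m = m by rewrite -mulrDl ab mul1r.
lra.
Qed.

Lemma psum1_wstar_LD2P (R : realType) (X Y : normedModType R) :
  (exists x : X, x != 0) ->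
  wstar_LD2P (fun x : X => `|x|) -> wstar_LD2P (@psum_norm R X Y 1%E).
Proof.
move=> hX LX; set N := psum_norm 1%E.
have N_ge0 : forall v, 0 <= N v := psum_norm_ge0 (@lte01 R).
have NZ : forall (c : R) v, N (c *: v) = `|c| * N v := psum_normZ (@lte01 R).
apply/(wstar_LD2PP N_ge0 NZ) => -[x y] Nz a e a0 e0.
rewrite /N psum_norm1 /= in Nz.
have [x0 nx0 ex] := unit_direction x hX.
have [f1 [f2 [u [[b1 s1] [b2 s2] nu fu]]]] :=
  (wstar_LD2PP (@normr_ge0 _ X) (@normrZ _ X)).1 LX x0 nx0 a e a0 e0.
have [g [g_lin g_le gy]] := norming_functional y.
have slice f : dual_ball (fun x : X => `|x|) f -> 1 - a < f x0 ->
    wstar_slice N (x, y) a (fun v => f v.1 + g v.2).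
  move=> bf fx0; split.
    apply: dual_ball_intro => // [c v w|v] /=.
      by rewrite (dual_ball_lin bf) g_lin; ring.
    rewrite /N psum_norm1; apply: le_trans (ler_normD _ _) (lerD _ (g_le _)).
    exact: (dual_ball_le (@normr_ge0 _ X) (@normrZ _ X) bf).
  rewrite /= gy ex (linfunZ (dual_ball_lin bf)) -[`|y|]mulr1.
  by apply: lt_convex_comb; rewrite ?normr_ge0 //; lra.
exists (fun v => f1 v.1 + g v.2), (fun v => f2 v.1 + g v.2), (u, 0).
split; [exact: slice | exact: slice | |].
  by rewrite /N psum_norm1 /= normr0 addr0.
by rewrite /= !(linfun0 g_lin) !addr0.
Qed.

Lemma psum_dual_ball (R : realType) (X Y : normedModType R) (r q ca cb : R)
    (f : X -> R) (g : Y -> R) :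
  0 < r -> 0 < q -> r^-1 + q^-1 = 1 ->
  0 <= ca -> 0 <= cb -> ca `^ q + cb `^ q = 1 ->
  dual_ball (fun x : X => `|x|) f -> dual_ball (fun y : Y => `|y|) g ->
  dual_ball (@psum_norm R X Y r%:E) (fun v => ca * f v.1 + cb * g v.2).
Proof.
move=> r0 q0 rq ca0 cb0 cq bf bg.
have r0' : (0 < r%:E)%E by rewrite lte_fin.
apply: dual_ball_intro => [c v|c v w|v]; first exact: psum_normZ.
  by rewrite /= (dual_ball_lin bf) (dual_ball_lin bg); ring.
have fv := dual_ball_le (@normr_ge0 _ X) (@normrZ _ X) bf v.1.
have gv := dual_ball_le (@normr_ge0 _ Y) (@normrZ _ Y) bg v.2.
have := hoelder2 (normr_ge0 v.1) (normr_ge0 v.2) ca0 cb0 r0 q0 rq.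
rewrite cq powR1 mulr1 => hold; apply: le_trans (ler_normD _ _) (le_trans _ hold).
rewrite !normrM (ger0_norm ca0) (ger0_norm cb0) [_ * ca]mulrC [_ * cb]mulrC.
by apply: lerD; apply: ler_wpM2l.
Qed.

Lemma psum_wstar_LD2P (R : realType) (X Y : normedModType R) (r : R) : 1 < r ->
  (exists x : X, x != 0) -> (exists y : Y, y != 0) ->
  wstar_LD2P (fun x : X => `|x|) -> wstar_LD2P (fun y : Y => `|y|) ->
  wstar_LD2P (@psum_norm R X Y r%:E).
Proof.
move=> r1 hX hY LX LY; have r0 : 0 < r by lra.
have r0' : (0 < r%:E)%E by rewrite lte_fin.
set N := psum_norm r%:E.
apply/(wstar_LD2PP (psum_norm_ge0 r0') (psum_normZ r0')) => -[x y] Nz a e a0 e0.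
pose q := r / (r - 1).
have q0 : 0 < q by rewrite divr_gt0 // subr_gt0.
have rq : r^-1 + q^-1 = 1 by rewrite /q invf_div; field; lra.
set A := `|x| `^ r; set B := `|y| `^ r.
have AB : A + B = 1.
  move: Nz; rewrite /N /psum_norm /= -/A -/B => Nz.
  by rewrite -(@powRK _ (A + B) r^-1) ?invr_gt0 ?addr_ge0 ?powR_ge0 // Nz invrK powR1.
(* (ca, cb) is the unit vector of l_q that norms (|x|, |y|) in l_r. *)
set ca := `|x| `^ (r - 1); set cb := `|y| `^ (r - 1).
have [caE cbE] : ca * `|x| = A /\ cb * `|y| = B by rewrite !(mulrC _ `|_|) !mulr_powRB1.
have conj_exp (c : R) : c `^ (r - 1) `^ q = c `^ r.
  by rewrite -powRrM /q mulrC divfK // subr_eq0 gt_eqF.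
have [x0 nx0 ex] := unit_direction x hX; have [y0 ny0 ey] := unit_direction y hY.
have slice f g : dual_ball (fun x : X => `|x|) f -> dual_ball (fun y : Y => `|y|) g ->
    1 - a < f x0 -> 1 - a < g y0 -> wstar_slice N (x, y) a (fun v => ca * f v.1 + cb * g v.2).
  move=> bf bg fx0 gy0; split.
    by apply: (psum_dual_ball r0 q0 rq); rewrite /ca /cb ?powR_ge0 // !conj_exp.
  rewrite /= ex ey (linfunZ (dual_ball_lin bf)) (linfunZ (dual_ball_lin bg)).
  by rewrite !mulrA caE cbE lt_convex_comb ?powR_ge0.
have [f1 [f2 [u [[bf1 sf1] [bf2 sf2] nu fu]]]] :=
  (wstar_LD2PP (@normr_ge0 _ X) (@normrZ _ X)).1 LX x0 nx0 a e a0 e0.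
have [g1 [g2 [w [[bg1 sg1] [bg2 sg2] nw gw]]]] :=
  (wstar_LD2PP (@normr_ge0 _ Y) (@normrZ _ Y)).1 LY y0 ny0 a e a0 e0.
exists (fun v => ca * f1 v.1 + cb * g1 v.2), (fun v => ca * f2 v.1 + cb * g2 v.2).
exists (`|x| *: u, `|y| *: w); split; [exact: slice | exact: slice | |].
  by rewrite -Nz; apply: psum_norm_le => //=; rewrite normrZ normr_id ler_piMr.
rewrite /= (linfunZ (dual_ball_lin bf1)) (linfunZ (dual_ball_lin bf2)).
rewrite (linfunZ (dual_ball_lin bg1)) (linfunZ (dual_ball_lin bg2)).
have -> : ca * (`|x| * f1 u) + cb * (`|y| * g1 w) - (ca * (`|x| * f2 u) + cb * (`|y| * g2 w))
    = A * (f1 u - f2 u) + B * (g1 w - g2 w) by rewrite -caE -cbE; ring.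
by rewrite lt_convex_comb ?powR_ge0.
Qed.

Lemma wstar_slices_of_retract (R : realType) (V : lmodType R) (N : V -> R)
    (W : normedModType R) (P : V -> W) (J : W -> V) :
  (forall (a : R) v, N (a *: v) = `|a| * N v) ->
  (forall (a : R) v w, P (a *: v + w) = a *: P v + P w) ->
  (forall v, `|P v| <= N v) -> (forall u, N (J u) = `|u|) -> (forall u, P (J u) = u) ->
  wstar_LD2P (fun u : W => `|u|) ->
  forall z, `|P z| = 1 -> forall a e, 0 < a -> 0 < e ->
  exists f g x,
    [/\ wstar_slice N z a f, wstar_slice N z a g, N x <= 1 & 2 - e < f x - g x].
Proof.
move=> NZ P_lin P_le NJ PJ LW z Pz a e a0 e0.
have [f1 [f2 [u [[bf1 sf1] [bf2 sf2] nu fu]]]] :=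
  (wstar_LD2PP (@normr_ge0 _ W) (@normrZ _ W)).1 LW (P z) Pz a e a0 e0.
have ball f : dual_ball (fun u : W => `|u|) f -> dual_ball N (fun v => f (P v)).
  move=> bf; apply: dual_ball_intro => // [c v w|v].
    by rewrite P_lin (dual_ball_lin bf).
  exact: le_trans (dual_ball_le (@normr_ge0 _ W) (@normrZ _ W) bf (P v)) (P_le v).
exists (fun v => f1 (P v)), (fun v => f2 (P v)), (J u).
by split; rewrite ?NJ ?PJ //; split=> //; exact: ball.
Qed.

Lemma psum_inf_wstar_LD2P (R : realType) (X Y : normedModType R) :
  wstar_LD2P (fun x : X => `|x|) -> wstar_LD2P (fun y : Y => `|y|) ->
  wstar_LD2P (@psum_norm R X Y +oo%E).
Proof.
move=> LX LY; have p0 : (0 < +oo :> \bar R)%E by [].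
apply/(wstar_LD2PP (psum_norm_ge0 p0) (psum_normZ p0)) => -[x y] Nz.
have [xy|yx] := leP `|x| `|y|.
- apply: (wstar_slices_of_retract (P := snd) (J := fun u => (0, u))) => //.
  + exact: psum_normZ.
  + exact: psum_norm_snd.
  + exact: psum_norm_inr.
  + by move: Nz; rewrite /psum_norm /= max_r.
- apply: (wstar_slices_of_retract (P := fst) (J := fun u => (u, 0))) => //.
  + exact: psum_normZ.
  + exact: psum_norm_fst.
  + exact: psum_norm_inl.
  + by move: Nz; rewrite /psum_norm /= max_l // ltW.
Qed.

Lemma scale_add_pair (R : pzRingType) (X Y : lmodType R) (a : R) (x w : X) (y z : Y) :
  a *: (x, y) + (w, z) = (a *: x + w, a *: y + z).
Proof. by []. Qed.

Section FlatAlongSnd.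
Variables (R : realType) (X Y : normedModType R) (N : X * Y -> R).
Hypothesis N_ge0 : forall v, 0 <= N v.
Hypothesis NZ : forall (a : R) v, N (a *: v) = `|a| * N v.

Definition flat_along_snd : Prop :=
  forall x : X, `|x| = 1 -> forall d : R, 0 < d ->
    exists2 t : R, 0 < t & forall w : Y, `|w| <= 1 -> N (x, t *: w) <= 1 + t * d.

Lemma wstar_slice_small_on_snd : flat_along_snd ->
  forall x : X, `|x| = 1 -> forall d : R, 0 < d ->
  exists2 a : R, 0 < a & forall h, dual_ball N h -> 1 - a < h (x, 0) ->
    forall w : Y, `|w| <= 1 -> `|h (0, w)| <= d.
Proof.
move=> flat x nx d d0; have d20 : 0 < d / 2 by rewrite divr_gt0.
have [t t0 Nt] := flat x nx _ d20.
exists (t * (d / 2)); first exact: mulr_gt0.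
move=> h bh hx.
have lt_d w : `|w| <= 1 -> h (0, w) < d.
  move=> nw; have : h (x, t *: w) <= 1 + t * (d / 2).
    exact: le_trans (ler_norm _) (le_trans (dual_ball_le N_ge0 NZ bh _) (Nt _ nw)).
  have -> : ((x, t *: w) : X * Y) = t *: (0, w) + (x, 0).
    by rewrite scale_add_pair scaler0 add0r addr0.
  rewrite (dual_ball_lin bh) => hxw.
  have : t * h (0, w) < t * d by lra.
  by rewrite ltr_pM2l.
move=> w nw; rewrite ler_norml !ltW ?lt_d //.
have := lt_d (- w); rewrite normrN => /(_ nw).
have -> : ((0, - w) : X * Y) = -1 *: (0, w) + (0, 0).
  by rewrite scale_add_pair !addr0 scaler0 scaleN1r.
rewrite (dual_ball_lin bh) (linfun0 (dual_ball_lin bh)) mulN1r addr0; lra.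
Qed.

End FlatAlongSnd.

Lemma wstar_LD2P_fst (R : realType) (X Y : normedModType R) (N : X * Y -> R) :
  (forall v, 0 <= N v) -> (forall (a : R) v, N (a *: v) = `|a| * N v) ->
  (forall v, `|v.1| <= N v) -> (forall v, `|v.2| <= N v) -> (forall x, N (x, 0) = `|x|) ->
  flat_along_snd N -> wstar_LD2P N -> wstar_LD2P (fun x : X => `|x|).
Proof.
move=> N_ge0 NZ N_fst N_snd N_inl flat LD.
apply/(wstar_LD2PP (@normr_ge0 _ X) (@normrZ _ X)) => x nx a e a0 e0.
have [a' a'0 small] :=
  wstar_slice_small_on_snd N_ge0 NZ flat nx (divr_gt0 e0 (ltr0n _ 4)).
have b0 : 0 < Num.min a a' by rewrite lt_min a0 a'0.
have Nx : N (x, 0) = 1 by rewrite N_inl.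
have [h1 [h2 [[u v] [[bh1 sh1] [bh2 sh2] Nuv gap]]]] :=
  (wstar_LD2PP N_ge0 NZ).1 LD _ Nx _ _ b0 (divr_gt0 e0 (ltr0n _ 2)).
have nv : `|v| <= 1 := le_trans (N_snd (u, v)) Nuv.
have restrict h : dual_ball N h -> dual_ball (fun x : X => `|x|) (fun x => h (x, 0)).
  move=> bh; apply: dual_ball_intro => [c x1|c x1 x2|x1]; first exact: normrZ.
    rewrite -(dual_ball_lin bh) scale_add_pair scaler0; congr (h (_, _)).
    exact/esym/addr0.
  by rewrite -N_inl; exact: dual_ball_le bh _.
have split_uv h : dual_ball N h -> h (u, v) = h (u, 0) + h (0, v).
  move=> bh; rewrite -(linfunD (dual_ball_lin bh)).
  by congr h; apply: esym; exact: (f_equal2 pair (addr0 u) (add0r v)).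
have min_le : Num.min a a' <= a by rewrite ge_min lexx.
have min_le' : Num.min a a' <= a' by rewrite ge_min lexx orbT.
exists (fun x => h1 (x, 0)), (fun x => h2 (x, 0)), u; split.
- by split; [exact: restrict | rewrite /=; lra].
- by split; [exact: restrict | rewrite /=; lra].
- exact: le_trans (N_fst (u, v)) Nuv.
- have sh1' : 1 - a' < h1 (x, 0) by lra.
  have sh2' : 1 - a' < h2 (x, 0) by lra.
  have := small _ bh1 sh1' _ nv; have := small _ bh2 sh2' _ nv.
  rewrite !ler_norml => /andP [? ?] /andP [? ?].
  by move: gap; rewrite (split_uv _ bh1) (split_uv _ bh2); lra.
Qed.

Lemma psum_norm_flat (R : realType) (X Y : normedModType R) (p : \bar R) :
  (1 < p)%E -> flat_along_snd (@psum_norm R X Y p).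
Proof.
case: p => [r|_|//]; last first.
  move=> x nx d d0; exists 1 => // w nw.
  by rewrite /psum_norm /= scale1r nx max_l //; lra.
rewrite lte_fin => r1 x nx d d0; have r0 : 0 < r by lra.
have r10 : 0 < r - 1 by lra.
(* t^(r-1) <= d gives (1 + t^r)^(1/r) <= 1 + t^r <= 1 + t d. *)
pose t := Num.min 1 (d `^ (r - 1)^-1).
have t0 : 0 < t by rewrite lt_min ltr01 powR_gt0.
have t_d : t `^ (r - 1) <= d.
  have ri0 : 0 < (r - 1)^-1 by rewrite invr_gt0.
  rewrite -[leRHS](powRK (ltW d0) ri0) invrK.
  apply: ge0_ler_powR; first exact: ltW.
  - by rewrite nnegrE ltW.
  - by rewrite nnegrE powR_ge0.
  - by rewrite ge_min lexx orbT.
exists t => // w nw; rewrite /psum_norm /= nx powR1.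
have tw : `|t *: w| `^ r <= t * d.
  have tw_le : `|t *: w| <= t by rewrite normrZ gtr0_norm // ler_piMr // ltW.
  apply: le_trans (_ : t `^ r <= _).
    apply: ge0_ler_powR tw_le; first exact: ltW.
    - by rewrite nnegrE.
    - by rewrite nnegrE ltW.
  by rewrite -(mulr_powRB1 (ltW t0) r0) ler_wpM2l // (ltW t0).
apply: le_trans (ler1_powR _ _) _; first by rewrite lerDl powR_ge0.
  by rewrite invf_le1 // ltW.
by rewrite lerD2l.
Qed.

Theorem corollary4p4 (R : realType) (X Y : completeNormedModType R)
  (hX : exists x : X, x != 0) (hY : exists y : Y, y != 0) :
  (* (a) *)
  (wstar_LD2P (fun x : X => `|x|) ->
     wstar_LD2P (@psum_norm R X Y 1%E)) /\
  (* (b) *)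
  (forall p : \bar R, (1 < p)%E ->
     wstar_LD2P (fun x : X => `|x|) -> wstar_LD2P (fun y : Y => `|y|) ->
     wstar_LD2P (@psum_norm R X Y p)) /\
  (* (c) *)
  (forall p : \bar R, (1 < p)%E ->
     wstar_LD2P (@psum_norm R X Y p) -> wstar_LD2P (fun x : X => `|x|)).
Proof.
split; [exact: psum1_wstar_LD2P | split].
- case=> [r| |//] p1 LX LY; last exact: psum_inf_wstar_LD2P.
  by apply: psum_wstar_LD2P; rewrite -?lte_fin.
- move=> p p1; have p0 : (0 < p)%E := lt_trans (@lte01 R) p1.
  apply: (@wstar_LD2P_fst R X Y); last exact: psum_norm_flat.
  + exact: psum_norm_ge0.
  + exact: psum_normZ.
  + exact: psum_norm_fst.
  + exact: psum_norm_snd.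
  + exact: psum_norm_inl.
Qed.
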